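(* Let $\Sigma$ be an arcwise connected metric space and $D\subset\Sigma$ an open subset such that $\overline D$ is not arcwise connected and the boundary $\partial D$ consists of exactly two points. Then $\Sigma\setminus D$ is arcwise connected. *)

From Stdlib Require Import Reals.
Open Scope R_scope.

Record is_metric {X : Type} (d : X -> X -> R) : Prop := {
  dist_nonneg : forall x y, 0 <= d x y;
  dist_refl   : forall x, d x x = 0;
  dist_sep    : forall x y, d x y = 0 -> x = y;
  dist_sym    : forall x y, d x y = d y x;
  dist_tri    : forall x y z, d x z <= d x y + d y z
}.

Definition is_open {X : Type} (d : X -> X -> R) (D : X -> Prop) : Prop :=
  forall x, D x -> exists eps, 0 < eps /\ forall y, d x y < eps -> D y.

Definition closure {X : Type} (d : X -> X -> R) (D : X -> Prop) : X -> Prop :=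
  fun x => forall eps, 0 < eps -> exists y, D y /\ d x y < eps.

Definition boundary {X : Type} (d : X -> X -> R) (D : X -> Prop) : X -> Prop :=
  fun x => closure d D x /\ closure d (fun y => ~ D y) x.

Definition continuous_on_01 {X : Type} (d : X -> X -> R) (g : R -> X) : Prop :=
  forall t, 0 <= t <= 1 -> forall eps, 0 < eps ->
    exists delta, 0 < delta /\
      forall s, 0 <= s <= 1 -> Rabs (s - t) < delta -> d (g s) (g t) < eps.

(* an arc: an injective continuous map [0,1] -> X (in a metric, hence Hausdorff,
   space it is automatically a homeomorphism onto its image) *)
Definition is_arc {X : Type} (d : X -> X -> R) (g : R -> X) : Prop :=
  continuous_on_01 d g /\
  (forall s t, 0 <= s <= 1 -> 0 <= t <= 1 -> g s = g t -> s = t).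

Definition arcwise_connected {X : Type} (d : X -> X -> R) (A : X -> Prop) : Prop :=
  forall x y, A x -> A y -> x <> y ->
    exists g, is_arc d g /\ g 0 = x /\ g 1 = y /\
      (forall t, 0 <= t <= 1 -> A (g t)).

From Pilot Require Import Defs.
From Stdlib Require Import Reals Lra Classical.
Open Scope R_scope.

(** Since [closure D] is not arcwise connected, some arc of the space leaves [closure D]; the
    stretch of that arc outside [closure D] joins two distinct boundary points of [D], that is,
    [p] and [q], while avoiding [D]. Now take an arc [g] between two points outside [D]. If it
    enters [D], it does so along a maximal open interval [(a, b)] whose ends are boundary
    points, hence are [p] and [q]; a second such interval would produce a third boundary point,
    so [g] avoids [D] outside [(a, b)]. Replacing [g] on [[a, b]] by the arc from [p] to [q]
    gives a path outside [D]; to keep it injective we cut the [p]-[q] arc at its first visit of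
    [g([b, 1])] and at its last visit of [g([0, a])] before that, both of which exist because
    these images are compact. *)

Definition continuous_on {X : Type} (d : X -> X -> R) (a b : R) (g : R -> X) : Prop :=
  forall t, a <= t <= b -> forall eps, 0 < eps ->
    exists delta, 0 < delta /\
      forall s, a <= s <= b -> Rabs (s - t) < delta -> d (g s) (g t) < eps.

Definition injective_on {X : Type} (a b : R) (g : R -> X) : Prop :=
  forall s t, a <= s <= b -> a <= t <= b -> g s = g t -> s = t.

(* [is_arc d g] unfolds to [arc_on d 0 1 g]. *)
Definition arc_on {X : Type} (d : X -> X -> R) (a b : R) (g : R -> X) : Prop :=
  continuous_on d a b g /\ injective_on a b g.

Definition glue {X : Type} (b : R) (g1 g2 : R -> X) (t : R) : X :=
  if Rle_dec t b then g1 t else g2 t.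

Definition arc_joins {X : Type} (d : X -> X -> R) (S : X -> Prop) (x y : X) : Prop :=
  exists g, is_arc d g /\ g 0 = x /\ g 1 = y /\ forall t, 0 <= t <= 1 -> S (g t).

Definition is_closed {X : Type} (d : X -> X -> R) (C : X -> Prop) : Prop :=
  forall x, closure d C x -> C x.

Definition excursion {X : Type} (U : X -> Prop) (g : R -> X) (a b : R) : Prop :=
  0 <= a < b /\ b <= 1 /\ ~ U (g a) /\ ~ U (g b) /\ forall t, a < t < b -> U (g t).

Lemma pair_no_three_distinct {X : Type} (p q x y z : X) :
  (x = p \/ x = q) -> (y = p \/ y = q) -> (z = p \/ z = q) -> x <> y -> x <> z -> y <> z -> False.
Proof. intros [-> | ->] [-> | ->] [-> | ->]; congruence. Qed.

Section ArcsInMetricSpace.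

Variables (X : Type) (d : X -> X -> R).
Hypothesis hd : is_metric d.

Lemma dist_diff_le (x y z : X) : Rabs (d z x - d z y) <= d x y.
Proof.
  pose proof (Defs.dist_tri d hd z y x); pose proof (Defs.dist_tri d hd z x y).
  rewrite (Defs.dist_sym d hd y x) in *. apply Rabs_le; lra.
Qed.

Lemma in_closure (A : X -> Prop) x : A x -> closure d A x.
Proof.
  intros Ax eps Heps. exists x. split; [exact Ax|]. rewrite (Defs.dist_refl d hd). exact Heps.
Qed.

Lemma closure_mono (A B : X -> Prop) x :
  (forall z, A z -> B z) -> closure d A x -> closure d B x.
Proof.
  intros HAB Hx eps Heps. destruct (Hx eps Heps) as [y [Ay Hxy]]. exists y; auto.
Qed.

Lemma is_closed_compl (U : X -> Prop) : is_open d U -> is_closed d (fun z => ~ U z).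
Proof.
  intros HU x Hx Ux. destruct (HU x Ux) as [eps [Heps Hball]].
  destruct (Hx eps Heps) as [y [Ny Hxy]]. exact (Ny (Hball y Hxy)).
Qed.

Lemma is_open_compl_closure (A : X -> Prop) : is_open d (fun z => ~ closure d A z).
Proof.
  intros x Hx. apply NNPP; intro Hno. apply Hx. intros eps Heps. apply NNPP; intro Hfar.
  apply Hno. exists (eps / 2). split; [lra|]. intros y Hxy Cy.
  destruct (Cy (eps / 2) ltac:(lra)) as [z [Az Hyz]].
  apply Hfar. exists z. split; [exact Az|].
  pose proof (Defs.dist_tri d hd x y z). lra.
Qed.

Lemma boundary_intro (A : X -> Prop) x : closure d A x -> ~ A x -> boundary d A x.
Proof. intros Cx Nx. split; [exact Cx | exact (in_closure _ x Nx)]. Qed.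

Lemma boundary_not_in (U : X -> Prop) x : is_open d U -> boundary d U x -> ~ U x.
Proof. intros HU [_ Cx]. exact (is_closed_compl U HU x Cx). Qed.

Lemma continuous_on_sub a b a' b' (g : R -> X) :
  a <= a' -> b' <= b -> continuous_on d a b g -> continuous_on d a' b' g.
Proof.
  intros Ha Hb Hg t Ht eps Heps. destruct (Hg t ltac:(lra) eps Heps) as [delta [Hdelta Hc]].
  exists delta. split; [exact Hdelta|]. intros s Hs. apply Hc. lra.
Qed.

Lemma continuous_on_opp l r (g : R -> X) :
  continuous_on d l r g -> continuous_on d (- r) (- l) (fun t => g (- t)).
Proof.
  intros Hg t Ht eps Heps. destruct (Hg (- t) ltac:(lra) eps Heps) as [delta [Hdelta Hc]].
  exists delta. split; [exact Hdelta|]. intros s Hs Hst. apply Hc; [lra|].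
  replace (- s - - t) with (- (s - t)) by ring. rewrite Rabs_Ropp. exact Hst.
Qed.

Lemma continuous_on_glue a b c (g1 g2 : R -> X) :
  a <= b <= c -> continuous_on d a b g1 -> continuous_on d b c g2 -> g1 b = g2 b ->
  continuous_on d a c (glue b g1 g2).
Proof.
  intros Hb H1 H2 E t Ht eps Heps. unfold glue.
  destruct (Rtotal_order t b) as [Htb | [-> | Hbt]].
  - destruct (H1 t ltac:(lra) eps Heps) as [delta [Hdelta Hc]].
    exists (Rmin delta (b - t)). split; [apply Rmin_pos; lra|]. intros s Hs Hst.
    pose proof (Rmin_l delta (b - t)); pose proof (Rmin_r delta (b - t)).
    pose proof (Rabs_def2 _ _ Hst).
    destruct (Rle_dec s b), (Rle_dec t b); try lra. apply Hc; lra.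
  - destruct (H1 b ltac:(lra) eps Heps) as [delta1 [Hd1 Hc1]].
    destruct (H2 b ltac:(lra) eps Heps) as [delta2 [Hd2 Hc2]].
    exists (Rmin delta1 delta2). split; [apply Rmin_pos; lra|]. intros s Hs Hst.
    pose proof (Rmin_l delta1 delta2); pose proof (Rmin_r delta1 delta2).
    destruct (Rle_dec b b); [|lra]. destruct (Rle_dec s b).
    + apply Hc1; lra.
    + rewrite E. apply Hc2; lra.
  - destruct (H2 t ltac:(lra) eps Heps) as [delta [Hdelta Hc]].
    exists (Rmin delta (t - b)). split; [apply Rmin_pos; lra|]. intros s Hs Hst.
    pose proof (Rmin_l delta (t - b)); pose proof (Rmin_r delta (t - b)).
    pose proof (Rabs_def2 _ _ Hst).
    destruct (Rle_dec s b), (Rle_dec t b); try lra. apply Hc; lra.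
Qed.

Lemma arc_on_sub a b a' b' (g : R -> X) :
  a <= a' -> b' <= b -> arc_on d a b g -> arc_on d a' b' g.
Proof.
  intros Ha Hb [Hc Hi]. split; [exact (continuous_on_sub a b a' b' g Ha Hb Hc)|].
  intros s t Hs Ht. apply Hi; lra.
Qed.

Lemma arc_on_shift a b a' b' c (g : R -> X) :
  (forall t, a' <= t <= b' -> a <= c + t <= b) -> arc_on d a b g ->
  arc_on d a' b' (fun t => g (c + t)).
Proof.
  intros Hr [Hc Hi]. split.
  - intros t Ht eps Heps. destruct (Hc (c + t) (Hr t Ht) eps Heps) as [delta [Hdelta H]].
    exists delta. split; [exact Hdelta|]. intros s Hs Hst. apply H; [exact (Hr s Hs)|].
    replace (c + s - (c + t)) with (s - t) by ring. exact Hst.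
  - intros s t Hs Ht E. apply Hi in E; [lra | exact (Hr s Hs) | exact (Hr t Ht)].
Qed.

Lemma arc_on_glue a b c (g1 g2 : R -> X) :
  a <= b <= c -> arc_on d a b g1 -> arc_on d b c g2 -> g1 b = g2 b ->
  (forall s t, a <= s <= b -> b < t <= c -> g1 s <> g2 t) ->
  arc_on d a c (glue b g1 g2).
Proof.
  intros Hb [Hc1 Hi1] [Hc2 Hi2] E Hdisj. split.
  - exact (continuous_on_glue a b c g1 g2 Hb Hc1 Hc2 E).
  - intros s t Hs Ht. unfold glue. destruct (Rle_dec s b), (Rle_dec t b); intro Est.
    + apply Hi1; [lra | lra | exact Est].
    + exfalso. apply (Hdisj s t); [lra | lra | exact Est].
    + exfalso. apply (Hdisj t s); [lra | lra | symmetry; exact Est].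
    + apply Hi2; [lra | lra | exact Est].
Qed.

Lemma arc_on_reparam lo hi a b (g : R -> X) :
  lo <= a <= hi -> lo <= b <= hi -> a <> b -> arc_on d lo hi g ->
  is_arc d (fun t => g (a + (b - a) * t)).
Proof.
  intros Ha Hb Hab [Hc Hi].
  assert (Hr : forall t, 0 <= t <= 1 -> lo <= a + (b - a) * t <= hi)
    by (intros t Ht; destruct (Rle_dec a b); split; nra).
  assert (Hk : 0 < Rabs (b - a)) by (apply Rabs_pos_lt; lra).
  split.
  - intros t Ht eps Heps. destruct (Hc _ (Hr t Ht) eps Heps) as [delta [Hdelta H]].
    exists (delta / Rabs (b - a)). split; [apply Rdiv_lt_0_compat; lra|].
    intros s Hs Hst. apply H; [exact (Hr s Hs)|].
    replace (a + (b - a) * s - (a + (b - a) * t)) with ((b - a) * (s - t)) by ring.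
    rewrite Rabs_mult. apply (Rmult_lt_compat_l (Rabs (b - a))) in Hst; [|exact Hk].
    replace (Rabs (b - a) * (delta / Rabs (b - a))) with delta in Hst by (field; lra).
    exact Hst.
  - intros s t Hs Ht E. apply Hi in E; [|exact (Hr s Hs) | exact (Hr t Ht)].
    apply (Rmult_eq_reg_l (b - a)); lra.
Qed.

Lemma arc_joins_segment (S : X -> Prop) (g : R -> X) lo hi a b :
  arc_on d lo hi g -> lo <= a <= hi -> lo <= b <= hi -> a <> b ->
  (forall t, Rmin a b <= t <= Rmax a b -> S (g t)) -> arc_joins d S (g a) (g b).
Proof.
  intros Hg Ha Hb Hab HS. exists (fun t => g (a + (b - a) * t)). cbv beta.
  split; [exact (arc_on_reparam lo hi a b g Ha Hb Hab Hg)|].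
  split; [f_equal; ring|]. split; [f_equal; ring|].
  intros t Ht. apply HS. unfold Rmin, Rmax. destruct Rle_dec; split; nra.
Qed.

Lemma arc_joins_sym (S : X -> Prop) x y : arc_joins d S x y -> arc_joins d S y x.
Proof.
  intros [g [Hg [<- [<- HS]]]]. apply (arc_joins_segment S g 0 1 1 0 Hg); [lra | lra | lra|].
  intros t Ht. rewrite Rmin_right, Rmax_left in Ht by lra. apply HS. exact Ht.
Qed.

Lemma last_hit l r (g : R -> X) (C : X -> Prop) :
  l <= r -> continuous_on d l r g -> is_closed d C -> C (g l) ->
  exists m, l <= m <= r /\ C (g m) /\ forall t, m < t <= r -> ~ C (g t).
Proof.
  intros Hlr Hg HC Hl.
  set (E := fun t => l <= t <= r /\ C (g t)).
  destruct (completeness E) as [m [Hub Hlub]].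
  { exists r. intros t [Ht _]. lra. }
  { exists l. split; [lra | exact Hl]. }
  assert (Hm : l <= m <= r).
  { split; [apply Hub; split; [lra | exact Hl] | apply Hlub; intros t [Ht _]; lra]. }
  exists m. split; [exact Hm | split].
  - apply HC. intros eps Heps. destruct (Hg m Hm eps Heps) as [delta [Hdelta Hc]].
    (* otherwise [m - delta] would be a smaller upper bound of [E] *)
    destruct (classic (exists t, E t /\ m - delta < t)) as [[t [[Ht Ct] Htm]] | Hnone].
    + exists (g t). split; [exact Ct|]. rewrite (Defs.dist_sym d hd).
      assert (t <= m) by (apply Hub; split; assumption).
      apply Hc; [lra | apply Rabs_def1; lra].
    + exfalso. assert (m <= m - delta); [|lra]. apply Hlub. intros t Et.
      apply Rnot_lt_le. intro Ht. apply Hnone. exists t. split; assumption.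
  - intros t Ht Ct. assert (t <= m) by (apply Hub; split; [lra | exact Ct]). lra.
Qed.

Lemma first_hit l r (g : R -> X) (C : X -> Prop) :
  l <= r -> continuous_on d l r g -> is_closed d C -> C (g r) ->
  exists m, l <= m <= r /\ C (g m) /\ forall t, l <= t < m -> ~ C (g t).
Proof.
  intros Hlr Hg HC Hr.
  destruct (last_hit (- r) (- l) (fun t => g (- t)) C) as [m [Hm [Cm Hafter]]].
  - lra.
  - exact (continuous_on_opp l r g Hg).
  - exact HC.
  - rewrite Ropp_involutive. exact Hr.
  - exists (- m). split; [lra | split; [exact Cm|]]. intros t Ht.
    specialize (Hafter (- t) ltac:(lra)). rewrite Ropp_involutive in Hafter. exact Hafter.
Qed.

Lemma is_closed_image lo hi (g : R -> X) :
  lo <= hi -> continuous_on d lo hi g ->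
  is_closed d (fun z => exists t, lo <= t <= hi /\ g t = z).
Proof.
  intros Hlh Hg z Hz.
  (* [t |-> d z (g t)] extended to all of [R] attains its minimum on [[lo, hi]], which is [0] *)
  set (clamp := fun t => Rmax lo (Rmin hi t)).
  assert (Hclamp : forall t, lo <= clamp t <= hi)
    by (intro t; unfold clamp, Rmax, Rmin; repeat destruct Rle_dec; lra).
  assert (Hclamp_id : forall t, lo <= t <= hi -> clamp t = t)
    by (intros t Ht; unfold clamp, Rmax, Rmin; repeat destruct Rle_dec; lra).
  assert (Hclamp_lip : forall s t, Rabs (clamp s - clamp t) <= Rabs (s - t))
    by (intros s t; unfold clamp, Rmax, Rmin; repeat destruct Rle_dec; split_Rabs; lra).
  set (f := fun t => d z (g (clamp t))).
  assert (Hf : forall c, lo <= c <= hi -> continuity_pt f c).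
  { intros c _ eps Heps. destruct (Hg (clamp c) (Hclamp c) eps Heps) as [delta [Hdelta Hc]].
    exists delta. split; [lra|]. intros t [_ Ht]. simpl in *. unfold R_dist in *.
    eapply Rle_lt_trans; [apply dist_diff_le|]. apply Hc; [apply Hclamp|].
    eapply Rle_lt_trans; [apply Hclamp_lip | exact Ht]. }
  destruct (continuity_ab_min f lo hi Hlh Hf) as [m [Hmin Hm]].
  exists m. split; [exact Hm|].
  assert (Hfm : f m = 0).
  { apply Rle_antisym; [|apply (Defs.dist_nonneg d hd)].
    apply Rnot_lt_le. intro Hpos. destruct (Hz (f m) Hpos) as [y [[t [Ht <-]] Hzt]].
    specialize (Hmin t Ht). unfold f in *. rewrite (Hclamp_id t Ht) in Hmin. lra. }
  unfold f in Hfm. rewrite (Hclamp_id m Hm) in Hfm.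
  symmetry. apply (Defs.dist_sep d hd). exact Hfm.
Qed.

Lemma exists_excursion (U : X -> Prop) (g : R -> X) t1 :
  continuous_on d 0 1 g -> is_open d U -> ~ U (g 0) -> ~ U (g 1) -> 0 <= t1 <= 1 ->
  U (g t1) -> exists a b, a < t1 < b /\ excursion U g a b.
Proof.
  intros Hg HU H0 H1 Ht1 Ut1.
  destruct (last_hit 0 t1 g (fun z => ~ U z)) as [a [Ha [Na Hafter]]].
  { lra. } { exact (continuous_on_sub 0 1 0 t1 g ltac:(lra) ltac:(lra) Hg). }
  { exact (is_closed_compl U HU). } { exact H0. }
  destruct (first_hit t1 1 g (fun z => ~ U z)) as [b [Hb [Nb Hbefore]]].
  { lra. } { exact (continuous_on_sub 0 1 t1 1 g ltac:(lra) ltac:(lra) Hg). }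
  { exact (is_closed_compl U HU). } { exact H1. }
  assert (a < t1) by (destruct (Req_dec a t1) as [<- | ]; [exfalso; exact (Na Ut1) | lra]).
  assert (t1 < b) by (destruct (Req_dec b t1) as [-> | ]; [exfalso; exact (Nb Ut1) | lra]).
  exists a, b. split; [lra|]. repeat split; try lra; [exact Na | exact Nb |].
  intros t Ht. apply NNPP. destruct (Rle_dec t t1).
  - exact (Hafter t ltac:(lra)).
  - exact (Hbefore t ltac:(lra)).
Qed.

Lemma excursion_ends_boundary (U : X -> Prop) (g : R -> X) a b :
  continuous_on d 0 1 g -> excursion U g a b -> boundary d U (g a) /\ boundary d U (g b).
Proof.
  intros Hg (Hab & Hb1 & Na & Nb & Hin).
  split; apply boundary_intro; try assumption; intros eps Heps.
  - destruct (Hg a ltac:(lra) eps Heps) as [delta [Hdelta Hc]].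
    set (t := a + Rmin delta (b - a) / 2).
    pose proof (Rmin_l delta (b - a)); pose proof (Rmin_r delta (b - a));
      pose proof (Rmin_pos delta (b - a) Hdelta ltac:(lra)).
    exists (g t). split; [apply Hin; unfold t; lra|].
    rewrite (Defs.dist_sym d hd). apply Hc; [unfold t; lra | apply Rabs_def1; unfold t; lra].
  - destruct (Hg b ltac:(lra) eps Heps) as [delta [Hdelta Hc]].
    set (t := b - Rmin delta (b - a) / 2).
    pose proof (Rmin_l delta (b - a)); pose proof (Rmin_r delta (b - a));
      pose proof (Rmin_pos delta (b - a) Hdelta ltac:(lra)).
    exists (g t). split; [apply Hin; unfold t; lra|].
    rewrite (Defs.dist_sym d hd). apply Hc; [unfold t; lra | apply Rabs_def1; unfold t; lra].
Qed.

Lemma excursion_unique (U : X -> Prop) (g : R -> X) (p q : X) a b :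
  is_arc d g -> is_open d U -> ~ U (g 0) -> ~ U (g 1) ->
  (forall x, boundary d U x -> x = p \/ x = q) -> excursion U g a b ->
  forall t, 0 <= t <= 1 -> U (g t) -> a < t < b.
Proof.
  intros [Hgc Hgi] HU H0 H1 Hpq Hexc t Ht Ut.
  pose proof Hexc as (Hab & Hb1 & Na & Nb & _).
  destruct (exists_excursion U g t Hgc HU H0 H1 Ht Ut) as [a' [b' [Ht' Hexc']]].
  pose proof Hexc' as (Hab' & Hb1' & _ & _ & Hin').
  destruct (excursion_ends_boundary U g a b Hgc Hexc) as [Ba Bb].
  destruct (excursion_ends_boundary U g a' b' Hgc Hexc') as [Ba' Bb'].
  assert (Hne : forall s s', 0 <= s <= 1 -> 0 <= s' <= 1 -> s <> s' -> g s <> g s')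
    by (intros s s' Hs Hs' Hss' E; exact (Hss' (Hgi s s' Hs Hs' E))).
  destruct (Rle_dec t a) as [Hta | Hat]; [|destruct (Rle_dec b t) as [Hbt | Htb]; [|lra]];
    exfalso.
  - assert (b' <= a) by (apply Rnot_lt_le; intro; apply Na, Hin'; lra).
    apply (pair_no_three_distinct p q (g a') (g b') (g b)); auto; apply Hne; lra.
  - assert (b <= a') by (apply Rnot_lt_le; intro; apply Nb, Hin'; lra).
    apply (pair_no_three_distinct p q (g a) (g a') (g b')); auto; apply Hne; lra.
Qed.

Lemma arc_splice (S : X -> Prop) (g h : R -> X) u v s0 s1 :
  is_arc d g -> is_arc d h -> 0 <= u < v -> v <= 1 -> 0 <= s0 < s1 -> s1 <= 1 ->
  h s0 = g u -> h s1 = g v ->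
  (forall s t, s0 < s <= s1 -> 0 <= t <= u -> h s <> g t) ->
  (forall s t, s0 <= s < s1 -> v <= t <= 1 -> h s <> g t) ->
  (forall t, 0 <= t <= u -> S (g t)) -> (forall s, s0 <= s <= s1 -> S (h s)) ->
  (forall t, v <= t <= 1 -> S (g t)) ->
  arc_joins d S (g 0) (g 1).
Proof.
  intros Hg Hh Huv Hv1 Hs01 Hs1 Eu Ev HdisjA HdisjB SA Sh SB.
  set (m := u + (s1 - s0)). set (L := m + (1 - v)).
  set (k1 := glue u g (fun t => h (s0 - u + t))).
  set (k := glue m k1 (fun t => g (v - m + t))).
  assert (Hk1 : arc_on d 0 m k1).
  { apply arc_on_glue.
    - unfold m; lra.
    - exact (arc_on_sub 0 1 0 u g ltac:(lra) ltac:(lra) Hg).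
    - apply (arc_on_shift 0 1); [intros t Ht; unfold m in Ht; lra | exact Hh].
    - rewrite <- Eu. f_equal; ring.
    - intros s t Hs Ht E. apply (HdisjA (s0 - u + t) s); [unfold m in Ht; lra | lra | auto]. }
  assert (Hk1m : k1 m = g v).
  { unfold k1, glue. destruct (Rle_dec m u); [unfold m in *; lra|].
    rewrite <- Ev. f_equal. unfold m; ring. }
  assert (Hk : arc_on d 0 L k).
  { apply arc_on_glue.
    - unfold L, m; lra.
    - exact Hk1.
    - apply (arc_on_shift 0 1); [intros t Ht; unfold L in Ht; lra | exact Hg].
    - rewrite Hk1m. f_equal; ring.
    - intros s t Hs Ht E. unfold L in Ht. unfold k1, glue in E. destruct (Rle_dec s u).
      + apply (proj2 Hg) in E; lra.
      + destruct (Req_dec (s0 - u + s) s1) as [E1 | N1].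
        * rewrite E1, Ev in E. apply (proj2 Hg) in E; lra.
        * apply (HdisjB (s0 - u + s) (v - m + t)); [unfold m in *; lra | lra | exact E]. }
  assert (Sk : forall tau, 0 <= tau <= L -> S (k tau)).
  { intros tau Htau. unfold k, k1, glue.
    destruct (Rle_dec tau m); [destruct (Rle_dec tau u)|].
    - apply SA; lra.
    - apply Sh. unfold m in *; lra.
    - apply SB. unfold L in Htau; lra. }
  assert (Hk0 : k 0 = g 0).
  { unfold k, k1, glue. destruct (Rle_dec 0 m); [|unfold m in *; lra].
    destruct (Rle_dec 0 u); [reflexivity | lra]. }
  assert (HkL : k L = g 1).
  { unfold k, glue at 1. destruct (Rle_dec L m).
    + replace L with m by (unfold L in *; lra). rewrite Hk1m. f_equal. unfold L in *; lra.
    + f_equal. unfold L; ring. }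
  rewrite <- Hk0, <- HkL. apply (arc_joins_segment S k 0 L); try (unfold L, m; lra); [exact Hk |].
  intros t Ht. rewrite Rmin_left, Rmax_right in Ht by (unfold L, m; lra). exact (Sk t Ht).
Qed.

Lemma arc_bypass (S : X -> Prop) (g : R -> X) a b :
  is_arc d g -> 0 <= a < b -> b <= 1 -> arc_joins d S (g a) (g b) ->
  (forall t, 0 <= t <= a -> S (g t)) -> (forall t, b <= t <= 1 -> S (g t)) ->
  arc_joins d S (g 0) (g 1).
Proof.
  intros Hg Hab Hb1 [h [Hh [Hh0 [Hh1 Sh]]]] SA SB.
  set (A := fun z => exists t, 0 <= t <= a /\ g t = z).
  set (B := fun z => exists t, b <= t <= 1 /\ g t = z).
  assert (HAB : forall z, A z -> B z -> False).
  { intros z [t [Ht <-]] [t' [Ht' E]]. pose proof (proj2 Hg t' t ltac:(lra) ltac:(lra) E). lra. }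
  destruct (first_hit 0 1 h B) as [s1 [Hs1 [Bs1 Hbefore]]].
  { lra. } { exact (proj1 Hh). }
  { apply is_closed_image; [lra | exact (continuous_on_sub 0 1 b 1 g ltac:(lra) ltac:(lra) (proj1 Hg))]. }
  { exists b. split; [lra | symmetry; exact Hh1]. }
  destruct (last_hit 0 s1 h A) as [s0 [Hs0 [As0 Hafter]]].
  { lra. } { exact (continuous_on_sub 0 1 0 s1 h ltac:(lra) ltac:(lra) (proj1 Hh)). }
  { apply is_closed_image; [lra | exact (continuous_on_sub 0 1 0 a g ltac:(lra) ltac:(lra) (proj1 Hg))]. }
  { exists a. split; [lra | symmetry; exact Hh0]. }
  assert (s0 < s1).
  { destruct (Req_dec s0 s1) as [E | ]; [rewrite E in As0; destruct (HAB _ As0 Bs1) | lra]. }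
  destruct As0 as [u [Hu Eu]], Bs1 as [v [Hv Ev]].
  apply (arc_splice S g h u v s0 s1); try assumption; try lra; auto.
  - intros s t Hs Ht E. apply (Hafter s Hs). exists t. split; [lra | auto].
  - intros s t Hs Ht E. apply (Hbefore s ltac:(lra)). exists t. split; [lra | auto].
  - intros t Ht. apply SA. lra.
  - intros s Hs. apply Sh. lra.
  - intros t Ht. apply SB. lra.
Qed.

Lemma boundary_pair_joined (D : X -> Prop) :
  is_open d D -> arcwise_connected d (fun _ => True) -> ~ arcwise_connected d (closure d D) ->
  exists x y, x <> y /\ boundary d D x /\ boundary d D y /\ arc_joins d (fun z => ~ D z) x y.
Proof.
  intros HD Hconn Hnot. apply NNPP. intro Hno. apply Hnot. intros u v Hu Hv Huv.
  destruct (Hconn u v I I Huv) as [g [Hg [Hg0 [Hg1 _]]]].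
  exists g. split; [exact Hg | split; [exact Hg0 | split; [exact Hg1 |]]].
  intros t Ht. apply NNPP. intro Nt.
  set (U := fun z => ~ closure d D z).
  destruct (exists_excursion U g t (proj1 Hg) (is_open_compl_closure D)) as [a [b [Hat Hexc]]];
    [unfold U; rewrite Hg0; tauto | unfold U; rewrite Hg1; tauto | exact Ht | exact Nt |].
  pose proof Hexc as (Hab & Hb1 & Na & Nb & Hin).
  destruct (excursion_ends_boundary U g a b (proj1 Hg) Hexc) as [[Ca _] [Cb _]].
  assert (HbdD : forall s, ~ U (g s) -> closure d U (g s) -> boundary d D (g s)).
  { intros s Ns Cs. split; [exact (NNPP _ Ns) |].
    apply (closure_mono U); [|exact Cs]. intros z Uz Dz. exact (Uz (in_closure D z Dz)). }
  apply Hno. exists (g a), (g b). split; [|split; [apply HbdD; auto | split; [apply HbdD; auto |]]].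
  - intro E. pose proof (proj2 Hg a b ltac:(lra) ltac:(lra) E). lra.
  - apply (arc_joins_segment _ g 0 1); [exact Hg | lra | lra | lra |].
    intros s Hs. rewrite Rmin_left, Rmax_right in Hs by lra.
    destruct (Req_dec s a) as [-> | ]; [exact (boundary_not_in D _ HD (HbdD a Na Ca)) |].
    destruct (Req_dec s b) as [-> | ]; [exact (boundary_not_in D _ HD (HbdD b Nb Cb)) |].
    intro Ds. apply (Hin s ltac:(lra)). exact (in_closure D _ Ds).
Qed.

Lemma two_point_boundary_joined (D : X -> Prop) (p q : X) :
  is_open d D -> arcwise_connected d (fun _ => True) -> ~ arcwise_connected d (closure d D) ->
  (forall x, boundary d D x -> x = p \/ x = q) ->
  forall x y, boundary d D x -> boundary d D y -> x <> y -> arc_joins d (fun z => ~ D z) x y.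
Proof.
  intros HD Hconn Hnot Hpq x y Bx By Hxy.
  destruct (boundary_pair_joined D HD Hconn Hnot) as (x0 & y0 & Hxy0 & Bx0 & By0 & J).
  destruct (Hpq x0 Bx0) as [-> | ->], (Hpq y0 By0) as [-> | ->],
    (Hpq x Bx) as [-> | ->], (Hpq y By) as [-> | ->];
    solve [congruence | exact J | exact (arc_joins_sym _ _ _ J)].
Qed.

End ArcsInMetricSpace.

Theorem mainTheorem10 (X : Type) (d : X -> X -> R) (hd : is_metric d)
  (D : X -> Prop)
  (hconn : arcwise_connected d (fun _ => True))
  (hopen : is_open d D)
  (hclos : ~ arcwise_connected d (closure d D))
  (hbd : exists p q, p <> q /\ forall x, boundary d D x <-> (x = p \/ x = q)) :
  arcwise_connected d (fun x => ~ D x).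
Proof.
  destruct hbd as [p [q [_ Hbd]]].
  assert (Hpq : forall x, boundary d D x -> x = p \/ x = q) by (intro x; apply Hbd).
  pose proof (two_point_boundary_joined X d hd D p q hopen hconn hclos Hpq) as Hjoin.
  intros x y Hx Hy Hxy.
  destruct (hconn x y I I Hxy) as [g [Hg [<- [<- _]]]].
  destruct (classic (exists t, 0 <= t <= 1 /\ D (g t))) as [[t [Ht Dt]] | Hmiss].
  2: { exists g. split; [exact Hg | split; [reflexivity | split; [reflexivity |]]].
       intros t Ht Dt. apply Hmiss. exists t. split; assumption. }
  destruct (exists_excursion X d hd D g t (proj1 Hg) hopen Hx Hy Ht Dt) as [a [b [_ Hexc]]].
  pose proof Hexc as (Hab & Hb1 & _).
  destruct (excursion_ends_boundary X d hd D g a b (proj1 Hg) Hexc) as [Ba Bb].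
  pose proof (excursion_unique X d hd D g p q a b Hg hopen Hx Hy Hpq Hexc) as Hinside.
  apply (arc_bypass X d hd (fun z => ~ D z) g a b Hg Hab Hb1).
  - apply Hjoin; [exact Ba | exact Bb |]. intro E. pose proof (proj2 Hg a b ltac:(lra) ltac:(lra) E). lra.
  - intros s Hs Ds. pose proof (Hinside s ltac:(lra) Ds). lra.
  - intros s Hs Ds. pose proof (Hinside s ltac:(lra) Ds). lra.
Qed.
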